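(* Let $\mathcal{M}$ be a finite $\mathcal{R}$-trivial monoid with unit $e$, $n=\#\mathcal{M}$, and $\mathcal{S}\subseteq\mathcal{M}$ a generating set. Let $\sigma_1,\dots,\sigma_p$ be representatives of the distinct sets $\mathcal{L}^{\mathcal{S}}_\sigma$ ($\sigma\in\mathcal{M}$), i.e. a complete system of representatives of loop-type classes, and let $d_i:=\#\{\sigma\in\mathcal{M}:\mathcal{L}^{\mathcal{S}}_\sigma=\mathcal{L}^{\mathcal{S}}_{\sigma_i}\}$. In $\mathbb{Z}\mathcal{M}$ define $$T_i:=\prod_{\tau\in\mathcal{L}^{\mathcal{S}}_{\sigma_i}}\tau\prod_{\kappa\in\mathcal{S}\setminus\mathcal{L}^{\mathcal{S}}_{\sigma_i}}(e-\kappa)\quad(i=1,\dots,p),$$ (factors in any order), $E_1:=\mathcal{P}_{a_1,b_1}(T_1)$, and recursively for $m=2,\dots,p$: $$Q_m:=T_m-\sum_{i=1}^{m-1}T_mE_i-\sum_{i=1}^{m-1}E_iT_m+\sum_{i,j=1}^{m-1}E_iT_mE_j,\qquad E_m:=\mathcal{P}_{a_m,b_m}(Q_m),$$ where for each $m$ the integers $a_m,b_m\ge0$ are arbitrary subject to $a_m\ge n-d_m$ and $b_m\ge d_m$. Then $E_1,\dots,E_p$ form a complete system of primitive orthogonal idempotents of $\mathbb{Z}\mathcal{M}$.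
   Context: $\mathcal{M}$ is $\mathcal{R}$-trivial: $\sigma\mathcal{M}=\tau\mathcal{M}$ implies $\sigma=\tau$, where $\sigma\mathcal{M}=\{\sigma\mu:\mu\in\mathcal{M}\}$. $\mathbb{Z}\mathcal{M}$ is the monoid ring of formal integer combinations of elements of $\mathcal{M}$, with unit $e$. $\mathcal{L}_\sigma:=\{\tau\in\mathcal{M}:\sigma\tau=\sigma\}$, $\mathcal{L}^{\mathcal{S}}_\sigma:=\mathcal{L}_\sigma\cap\mathcal{S}$; $\sigma\sim\sigma'$ (same loop-type) iff $\mathcal{L}_\sigma=\mathcal{L}_{\sigma'}$. For $X\in\mathbb{Z}\mathcal{M}$ and $a,b\in\mathbb{Z}_{\ge0}$, $\mathcal{P}_{a,b}(X):=e-(e-X^a)^b$. A complete system of primitive orthogonal idempotents of a ring $A$ is a finite set of nonzero $E_1,\dots,E_p\in A$ with $E_i^2=E_i$, $E_iE_j=0$ for $i\ne j$, each $E_i$ primitive (if $E_i=X+Y$ with $X^2=X$, $Y^2=Y$, $XY=YX=0$ then $X=0$ or $Y=0$), and $\sum_i E_i=1_A$. *)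

From HB Require Import structures.
From mathcomp Require Import all_boot all_order all_algebra.
Set Implicit Arguments. Unset Strict Implicit. Unset Printing Implicit Defensive.
Import Order.TTheory GRing.Theory Num.Theory.
Local Open Scope ring_scope.

Section MonoidRing.
(* A finite monoid is given by a finite carrier [M], a multiplication [mul]
   and a unit [e]; the monoid axioms are hypotheses of the main theorem. *)
Variables (M : finType) (mul : M -> M -> M) (e : M).

Definition R_trivial : Prop :=
  forall s t : M, [set mul s u | u : M] = [set mul t u | u : M] -> s = t.

Definition generates (S : {set M}) : Prop :=
  forall x : M, exists2 w : seq M, {subset w <= S} & x = foldr mul e w.

Definition LS (S : {set M}) (s : M) : {set M} := [set t in S | mul s t == s].

Definition ZM := {ffun M -> int}.

Definition zof (x : M) : ZM := [ffun s => ((s == x) : nat)%:Z].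
Definition zone : ZM := zof e.
Definition zmul (f g : ZM) : ZM :=
  [ffun s => \sum_(x : M) \sum_(y : M | mul x y == s) f x * g y].
Definition zexp (f : ZM) (n : nat) : ZM := iter n (zmul f) zone.
Definition zprod (s : seq ZM) : ZM := foldr zmul zone s.

Definition Pab (a b : nat) (X : ZM) : ZM := zone - zexp (zone - zexp X a) b.

Definition Qstep (T : ZM) (Es : seq ZM) : ZM :=
  T - \sum_(x <- Es) zmul T x - \sum_(x <- Es) zmul x T
    + \sum_(x <- Es) \sum_(y <- Es) zmul (zmul x T) y.

Fixpoint Eseq (T : nat -> ZM) (a b : nat -> nat) (m : nat) : seq ZM :=
  match m with
  | 0 => [::]
  | m'.+1 => let prev := Eseq T a b m' in
             rcons prev (Pab (a m') (b m') (Qstep (T m') prev))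
  end.

(* E_1 = P(T_1) (Qstep T [::] = T) and E_m = P(Q_m), indexed by 'I_p. *)
Definition Esys (p : nat) (T : 'I_p -> ZM) (a b : 'I_p -> nat) : 'I_p -> ZM :=
  let Tn m := if insub m is Some i then T i else 0 in
  let an m := if insub m is Some i then a i else 0%N in
  let bn m := if insub m is Some i then b i else 0%N in
  fun i => nth 0 (Eseq Tn an bn p) i.

Definition idempotent (X : ZM) : Prop := zmul X X = X.

Definition primitive (X : ZM) : Prop :=
  forall Y Z : ZM, X = Y + Z -> idempotent Y -> idempotent Z ->
    zmul Y Z = 0 -> zmul Z Y = 0 -> Y = 0 \/ Z = 0.

Definition complete_prim_orth_idem (p : nat) (E : 'I_p -> ZM) : Prop :=
  [/\ forall i, E i != 0,
      forall i, idempotent (E i),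
      forall i j, i != j -> zmul (E i) (E j) = 0,
      forall i, primitive (E i)
    & \sum_(i < p) E i = zone].

End MonoidRing.

(* Each s in M gives a character [chi s] of Z M, the trivial character of the
   submonoid L_s; it is a ring morphism to Z because M is R-trivial, and it
   only depends on the loop type of s.  [chi s T_i] is 1 exactly on the i-th
   loop-type class, and so is [chi s Q_m], since the earlier E_j vanish on that
   class.  An x whose characters are all 0 or 1 satisfies x^(n-d) (1-x)^d = 0,
   d being the number of characters equal to 1: multiplying by x or by 1 - x
   kills the coefficient of an R-maximal element of the support.  Hence
   P_{a,b}(Q_m) is an idempotent with the characters of Q_m, orthogonal to the
   E_j like Q_m.  Finally an idempotent whose characters all vanish is 0; this
   gives completeness (for 1 - sum E_i) and primitivity (a summand of E_i has
   0/1 characters that are constant on the class of sigma_i). *)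

From HB Require Import structures.
From mathcomp Require Import all_boot all_order all_algebra.
Set Implicit Arguments. Unset Strict Implicit. Unset Printing Implicit Defensive.
Import Order.TTheory GRing.Theory Num.Theory.
Local Open Scope ring_scope.

Section Idempotents.
Variable R : pzRingType.
Implicit Types (x u : R) (Es : seq R).

Lemma Pab_idem x a0 b0 a b :
  x ^+ a0 * (1 - x) ^+ b0 = 0 -> (a0 <= a)%N -> (b0 <= b)%N ->
  (1 - (1 - x ^+ a) ^+ b) * (1 - (1 - x ^+ a) ^+ b) = 1 - (1 - x ^+ a) ^+ b.
Proof.
move=> nil0 le_a le_b.
have cx : GRing.comm x (1 - x) by apply: commrB; [exact: commr1 | exact: commr_refl].
have nil : x ^+ a * (1 - x) ^+ b = 0.
  rewrite -(subnK le_a) -(subnKC le_b) !exprD -mulrA [_ ^+ a0 * _]mulrA nil0.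
  by rewrite mul0r mulr0.
set y := 1 - x ^+ a; set f := 1 - y ^+ b.
set G := \sum_(i < b) y ^+ i; set H := \sum_(i < a) x ^+ i.
have fE : f = x ^+ a * G by rewrite /f -opprB subrX1 -mulNr opprB subKr.
have yE : y = (1 - x) * H by rewrite /y -opprB subrX1 -mulNr opprB.
have cxH : GRing.comm (1 - x) H by apply: commr_sum => i _; apply: commrX; exact: commr_sym.
have cyx : GRing.comm y (1 - x).
  by apply: commr_sym; apply: commrB; [exact: commr1 | apply: commrX; exact: commr_sym].
have cGx : GRing.comm G ((1 - x) ^+ b).
  apply: commrX; apply: commr_sym; apply: commr_sum => i _.
  by apply: commrX; exact: commr_sym.
have f_1f : f * (1 - f) = 0.
  rewrite subKr fE yE exprMn_comm // -mulrA [G * _]mulrA cGx !mulrA nil.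
  by rewrite !mul0r.
by rewrite -[RHS]subr0 -f_1f mulrBr mulr1 subKr.
Qed.

Lemma mulr_Pab_eq0 u x a b :
  u * x = 0 -> (0 < a)%N -> u * (1 - (1 - x ^+ a) ^+ b) = 0.
Proof.
move=> ux a_gt0; suff ub : u * (1 - x ^+ a) ^+ b = u by rewrite mulrBr mulr1 ub subrr.
have u1 : u * (1 - x ^+ a) = u.
  by rewrite mulrBr mulr1 -(prednK a_gt0) exprS mulrA ux mul0r subr0.
by elim: b => [|b IH]; rewrite ?mulr1 // exprSr mulrA IH.
Qed.

Lemma Pab_mulr_eq0 u x a b :
  x * u = 0 -> (0 < a)%N -> (1 - (1 - x ^+ a) ^+ b) * u = 0.
Proof.
move=> xu a_gt0; suff bu : (1 - x ^+ a) ^+ b * u = u by rewrite mulrBl mul1r bu subrr.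
have u1 : (1 - x ^+ a) * u = u.
  by rewrite mulrBl mul1r -(prednK a_gt0) exprSr -mulrA xu mulr0 subr0.
by elim: b => [|b IH]; rewrite ?mul1r // exprS -mulrA IH.
Qed.

Definition orthogonal_idempotents Es :=
  forall i j, (i < size Es)%N -> (j < size Es)%N ->
    Es`_i * Es`_j = if i == j then Es`_i else 0.

Lemma orthogonal_idempotents_rcons Es E :
  orthogonal_idempotents Es -> E * E = E ->
  (forall i, (i < size Es)%N -> Es`_i * E = 0 /\ E * Es`_i = 0) ->
  orthogonal_idempotents (rcons Es E).
Proof.
move=> orth EE orthE i j; rewrite size_rcons !ltnS !nth_rcons => ile jle.
have lt_of_ne k : (k <= size Es -> k != size Es -> k < size Es)%N.
  by move=> kle kne; rewrite ltn_neqAle kne.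
have [->|/(lt_of_ne _ ile) lti] := eqVneq i (size Es);
  have [->|/(lt_of_ne _ jle) ltj] := eqVneq j (size Es); rewrite ?ltnn ?eqxx.
- exact: EE.
- by rewrite ltj (orthE _ ltj).2.
- by rewrite lti (orthE _ lti).1 (ltn_eqF lti).
- by rewrite lti ltj; exact: orth.
Qed.

Lemma orthogonal_idempotents_sum Es i : orthogonal_idempotents Es -> (i < size Es)%N ->
  Es`_i * \sum_(x <- Es) x = Es`_i /\ (\sum_(x <- Es) x) * Es`_i = Es`_i.
Proof.
move=> orth ilt; rewrite (big_nth 0) big_mkord mulr_sumr mulr_suml.
have others j : j != Ordinal ilt -> Es`_i * Es`_j = 0 /\ Es`_j * Es`_i = 0.
  by rewrite -val_eqE /= => ji; rewrite !orth // (negPf ji) eq_sym (negPf ji).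
rewrite (bigD1 (Ordinal ilt)) // [in X in _ /\ X](bigD1 (Ordinal ilt)) //= orth // eqxx.
by rewrite !big1 ?addr0 // => j /others[].
Qed.

End Idempotents.

Lemma prodr_indicator (R : comPzRingType) (I : finType) (A : {pred I}) (P : pred I) :
  \prod_(i in A) (if P i then 1 else 0 : R) = if [forall i in A, P i] then 1 else 0.
Proof.
have [/forall_inP AP | /forall_inPn[i iA /negPf Pi]] := boolP [forall i in A, P i].
  by rewrite big1 // => i /AP ->.
by rewrite (bigD1 i) //= Pi mul0r.
Qed.

Section MonoidRing.
Variables (M : finType) (mul : M -> M -> M) (e : M).
Hypotheses (mulA : associative mul) (mul1m : left_id e mul) (mulm1 : right_id e mul).

Local Notation zmul := (zmul mul).
Local Notation zone := (zone e).

Lemma zmulE (f g : ZM M) s :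
  zmul f g s = \sum_x \sum_y (if mul x y == s then f x * g y else 0).
Proof. by rewrite ffunE; apply: eq_bigr => x _; rewrite big_mkcond. Qed.

Lemma zofE (x s : M) : zof x s = if s == x then 1 else 0.
Proof. by rewrite ffunE; case: eqP. Qed.

Let sum_if (I : finType) (c : bool) (F : I -> int) :
  (if c then \sum_i F i else 0) = \sum_i (if c then F i else 0).
Proof. by case: c; rewrite // big1. Qed.

Let sum_if_eq (F : M -> int) w : \sum_z (if w == z then F z else 0) = F w.
Proof. by rewrite -big_mkcond (big_pred1 w) // => z; rewrite /= eq_sym. Qed.

Lemma zmulA : associative zmul.
Proof.
move=> f g h; apply/ffunP => s.
pose triple t := \sum_x \sum_y \sum_z (if t x y z == s then f x * g y * h z else 0).
have -> : zmul f (zmul g h) s = triple (fun x y z => mul x (mul y z)).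
  rewrite zmulE; apply: eq_bigr => x _.
  under eq_bigr => w _ do rewrite zmulE big_distrr /= sum_if.
  rewrite exchange_big /=; apply: eq_bigr => y _.
  under eq_bigr => w _ do rewrite big_distrr /= sum_if.
  rewrite exchange_big /=; apply: eq_bigr => z _.
  rewrite -(sum_if_eq (fun w => if mul x w == s then f x * g y * h z else 0)).
  by apply: eq_bigr => w _; do 2 case: ifP => _ //; rewrite ?mulr0 ?mulrA.
have -> : zmul (zmul f g) h s = triple (fun x y z => mul (mul x y) z).
  rewrite zmulE.
  under eq_bigr => w _ do under eq_bigr => z _ do rewrite zmulE big_distrl /= sum_if.
  under eq_bigr => w _ do under eq_bigr => z _ do under eq_bigr => x _ do
    rewrite big_distrl /= sum_if.
  under eq_bigr => w _ do rewrite exchange_big /=.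
  under eq_bigr => w _ do under eq_bigr => x _ do rewrite exchange_big /=.
  rewrite exchange_big /=; apply: eq_bigr => x _.
  rewrite exchange_big /=; apply: eq_bigr => y _.
  rewrite exchange_big /=; apply: eq_bigr => z _.
  rewrite -(sum_if_eq (fun w => if mul w z == s then f x * g y * h z else 0) (mul x y)).
  by apply: eq_bigr => w _; do 2 case: ifP => _ //; rewrite mul0r.
by apply: eq_bigr => x _; apply: eq_bigr => y _; apply: eq_bigr => z _; rewrite mulA.
Qed.

Lemma zmul1m : left_id zone zmul.
Proof.
move=> f; apply/ffunP => s; rewrite zmulE (bigD1 e) //= [X in _ + X]big1 ?addr0.
  rewrite -[RHS](sum_if_eq f s); apply: eq_bigr => y _.
  by rewrite zofE eqxx mul1r mul1m eq_sym.
by move=> x /negPf nx; apply: big1 => y _; rewrite zofE nx mul0r; case: ifP.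
Qed.

Lemma zmulm1 : right_id zone zmul.
Proof.
move=> f; apply/ffunP => s; rewrite zmulE -[RHS](sum_if_eq f s).
apply: eq_bigr => x _; rewrite (bigD1 e) //= [X in _ + X]big1 ?addr0.
  by rewrite zofE eqxx mulr1 mulm1 eq_sym.
by move=> y /negPf ny; rewrite zofE ny mulr0; case: ifP.
Qed.

Lemma zmulDl : left_distributive zmul +%R.
Proof.
move=> f g h; apply/ffunP => s; rewrite zmulE [in RHS]ffunE !zmulE -big_split /=.
apply: eq_bigr => x _; rewrite -big_split /=; apply: eq_bigr => y _.
by case: ifP; rewrite ?addr0 // ffunE mulrDl.
Qed.

Lemma zmulDr : right_distributive zmul +%R.
Proof.
move=> f g h; apply/ffunP => s; rewrite zmulE [in RHS]ffunE !zmulE -big_split /=.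
apply: eq_bigr => x _; rewrite -big_split /=; apply: eq_bigr => y _.
by case: ifP; rewrite ?addr0 // ffunE mulrDr.
Qed.

HB.instance Definition _ := GRing.Zmodule.on (ZM M).
HB.instance Definition _ :=
  GRing.Zmodule_isPzRing.Build (ZM M) zmulA zmul1m zmulm1 zmulDl zmulDr.

Lemma zexpE (x : ZM M) n : zexp mul e x n = x ^+ n.
Proof. by elim: n => // n IH; rewrite exprS -IH. Qed.

Lemma PabE (x : ZM M) a b : Pab mul e a b x = 1 - (1 - x ^+ a) ^+ b.
Proof. by rewrite /Pab !zexpE. Qed.

Lemma zprod_map (I : Type) (r : seq I) (F : I -> ZM M) :
  zprod mul e (map F r) = \prod_(i <- r) F i.
Proof. by elim: r => [|i r IH]; rewrite ?big_nil // big_cons /= IH. Qed.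

Lemma QstepE (x : ZM M) Es :
  Qstep mul x Es = (1 - \sum_(y <- Es) y) * x * (1 - \sum_(y <- Es) y).
Proof.
set F := \sum_(y <- Es) y.
have TF : \sum_(y <- Es) zmul x y = x * F by rewrite mulr_sumr.
have FT : \sum_(y <- Es) zmul y x = F * x by rewrite mulr_suml.
have FTF : \sum_(y <- Es) \sum_(z <- Es) zmul (zmul y x) z = F * x * F.
  by rewrite !mulr_suml; apply: eq_bigr => y _; rewrite mulr_sumr.
rewrite /Qstep TF FT FTF mulrBl mul1r mulrBr mulr1 mulrBl opprB addrA.
by rewrite (addrAC x) -[LHS]addrA [X in _ + X]addrC addrA.
Qed.

Lemma Qstep_orthogonal (x : ZM M) Es i : orthogonal_idempotents Es -> (i < size Es)%N ->
  Es`_i * Qstep mul x Es = 0 /\ Qstep mul x Es * Es`_i = 0.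
Proof.
move=> orth ilt; have [EF FE] := orthogonal_idempotents_sum orth ilt.
rewrite QstepE; split; first by rewrite !mulrA [Es`_i * _]mulrBr mulr1 EF subrr !mul0r.
by rewrite -!mulrA [_ * Es`_i]mulrBl mul1r FE subrr !mulr0.
Qed.

Section Characters.
Hypothesis Rtriv : R_trivial mul.

Lemma fixed_mul s x y : (mul s (mul x y) == s) = (mul s x == s) && (mul s y == s).
Proof.
apply/eqP/andP => [sxy|[/eqP sx /eqP sy]]; last by rewrite mulA sx sy.
have sx : mul s x = s.
  apply: Rtriv; apply/setP => z; apply/imsetP/imsetP => [[u _ ->]|[u _ ->]].
    by exists (mul x u); rewrite ?mulA.
  by exists (mul y u); rewrite // -{1}sxy !mulA.
by split; apply/eqP; rewrite // -{2}sxy mulA sx.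
Qed.

Definition chi s (x : ZM M) : int := \sum_(t | mul s t == s) x t.

Lemma chiE s x : chi s x = \sum_t (if mul s t == s then x t else 0).
Proof. exact: big_mkcond. Qed.

Lemma chiB s : zmod_morphism (chi s).
Proof. by move=> x y; rewrite /chi -sumrB; apply: eq_bigr => t _; rewrite !ffunE. Qed.

Lemma chi_zof s t : chi s (zof t) = if mul s t == s then 1 else 0.
Proof.
rewrite chiE (bigD1 t) //= big1 ?addr0 => [|u ut]; rewrite zofE ?eqxx //.
by rewrite (negPf ut); case: ifP.
Qed.

Lemma chiM s : monoid_morphism (chi s).
Proof.
split=> [|x y]; first by change (chi s (zof e) = 1); rewrite chi_zof mulm1 eqxx.
rewrite !chiE big_distrl /=; under [RHS]eq_bigr => u _ do rewrite big_distrr /=.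
under eq_bigr => t _ do rewrite zmulE sum_if.
rewrite exchange_big /=; apply: eq_bigr => u _.
under eq_bigr => t _ do rewrite sum_if.
rewrite exchange_big /=; apply: eq_bigr => v _.
rewrite (bigD1 (mul u v)) //= big1 ?addr0 => [|t /negPf tuv]; last first.
  by case: ifP => // _; rewrite eq_sym tuv.
rewrite eqxx fixed_mul.
by case: (mul s u == s); case: (mul s v == s); rewrite ?mul0r ?mulr0.
Qed.

HB.instance Definition _ s := GRing.isZmodMorphism.Build (ZM M) int (chi s) (chiB s).
HB.instance Definition _ s := GRing.isMonoidMorphism.Build (ZM M) int (chi s) (chiM s).

Definition right_ideal (A : {set M}) := forall s u, s \in A -> mul s u \in A.
Definition supported (y : ZM M) (A : {set M}) := forall s, s \notin A -> y s = 0.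

Lemma supported_mulr A y x : right_ideal A -> supported y A -> supported (y * x) A.
Proof.
move=> idA suppy s sA; rewrite zmulE big1 // => u _; apply: big1 => v _.
case: ifP => // /eqP uvs; have [uA|uA] := boolP (u \in A); last by rewrite suppy ?mul0r.
by move: (idA _ v uA); rewrite uvs (negPf sA).
Qed.

Definition R_maximal (A : {set M}) s := forall t u, t \in A -> mul t u = s -> t = s.

Lemma exists_R_maximal A : A != set0 -> exists2 s, s \in A & R_maximal A s.
Proof.
case/set0Pn => t0 t0A.
have [s sA smax] := @arg_maxnP _ t0 (mem A) (fun t => #|[set mul t u | u : M]|) t0A.
exists s => // t u tA tus; apply: Rtriv; apply/eqP.
rewrite eq_sym eqEcard; apply/andP; split; last exact: smax.
apply/subsetP => z /imsetP[v _ ->]; apply/imsetP; exists (mul u v) => //.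
by rewrite -tus mulA.
Qed.

Lemma right_ideal_setD1 A s : right_ideal A -> R_maximal A s -> right_ideal (A :\ s).
Proof.
move=> idA smax t u; rewrite !inE => /andP[ts tA]; rewrite idA // andbT.
by apply: contra ts => /eqP tus; rewrite (smax t u).
Qed.

Lemma supported_mul_chi0 A s y z : right_ideal A -> R_maximal A s ->
  supported y A -> chi s z = 0 -> supported (y * z) (A :\ s).
Proof.
move=> idA smax suppy chi_z t; rewrite !inE negb_and negbK.
case/orP=> [/eqP-> | tA]; last exact: (supported_mulr z idA suppy tA).
rewrite zmulE (bigD1 s) //= [X in _ + X]big1 ?addr0 => [|u us]; last first.
  apply: big1 => v _; case: ifP => // /eqP uvs.
  have [uA|uA] := boolP (u \in A); last by rewrite suppy ?mul0r.
  by rewrite (smax u v uA uvs) eqxx in us.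
transitivity (y s * chi s z); last by rewrite chi_z mulr0.
rewrite chiE big_distrr /=.
by apply: eq_bigr => v _; case: ifP; rewrite ?mulr0.
Qed.

Lemma supported_annihilator x : (forall t, chi t x = 0 \/ chi t x = 1) ->
  forall A y, right_ideal A -> supported y A ->
  y * (x ^+ (#|A| - #|[set t in A | chi t x == 1]|) *
       (1 - x) ^+ #|[set t in A | chi t x == 1]|) = 0.
Proof.
move=> x01 A; have [n] := ubnP #|A|; elim: n A => // n IH A /ltnSE leAn y idA suppy.
set c := #|[set t in A | _]|.
have [A0|nzA] := eqVneq A set0.
  suff -> : y = 0 by rewrite mul0r.
  by apply/ffunP => s; rewrite ffunE suppy // A0 inE.
have [s sA smax] := exists_R_maximal nzA.
set A' := A :\ s; set c' := #|[set t in A' | chi t x == 1]|.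
have cardA : #|A| = #|A'|.+1 by rewrite (cardsD1 s A) sA.
have cE : c = ((chi s x == 1) + c')%N.
  rewrite /c (cardsD1 s) !inE sA /=; congr (_ + _)%N.
  by apply: eq_card => t; rewrite !inE; case: (t == s).
have le_c' : (c' <= #|A'|)%N by apply/subset_leq_card/subsetP => t; rewrite inE => /andP[].
have IHs z : chi s z = 0 -> y * z * (x ^+ (#|A'| - c') * (1 - x) ^+ c') = 0.
  move=> chi_z; apply: IH; first by rewrite -ltnS -cardA.
    exact: right_ideal_setD1.
  exact: supported_mul_chi0.
have [chi_x|chi_x] := x01 s; rewrite chi_x /= in cE.
  have := IHs x chi_x; rewrite cE add0n cardA subSn //.
  by rewrite exprS !mulrA.
have chi_1x : chi s (1 - x) = 0 by rewrite rmorphB rmorph1 /= chi_x subrr.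
have cxX : GRing.comm (x ^+ (#|A'| - c')) (1 - x).
  by apply/commr_sym/commrX/commr_sym/commrB; [exact: commr1 | exact: commr_refl].
have := IHs _ chi_1x; rewrite cE cardA subSS exprS.
by rewrite [x ^+ _ * (_ * _)]mulrA cxX -!mulrA.
Qed.

Lemma chi01_nilpotent x : (forall t, chi t x = 0 \/ chi t x = 1) ->
  x ^+ (#|M| - #|[set t | chi t x == 1]|) * (1 - x) ^+ #|[set t | chi t x == 1]| = 0.
Proof.
move=> x01; have := @supported_annihilator x x01 [set: M] 1.
rewrite mul1r cardsT; have -> : [set t in [set: M] | chi t x == 1] = [set t | chi t x == 1].
  by apply/setP => t; rewrite !inE.
by apply; [move=> s u | move=> s]; rewrite in_setT.
Qed.

Lemma idem_chi0_eq0 u : u * u = u -> (forall s, chi s u = 0) -> u = 0.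
Proof.
move=> uu chi_u; have := chi01_nilpotent (fun t => or_introl (chi_u t)).
have -> : #|[set t | chi t u == 1]| = 0%N by apply: eq_card0 => t; rewrite inE chi_u.
rewrite subn0 expr0 mulr1; have : (0 < #|M|)%N by apply/card_gt0P; exists e.
case: #|M| => // n _; suff -> : u ^+ n.+1 = u by [].
by elim: n => // n IH; rewrite exprS IH.
Qed.

Lemma idem_chi1_eq1 u : u * u = u -> (forall s, chi s u = 1) -> u = 1.
Proof.
move=> uu chi_u; apply/eqP; rewrite eq_sym -subr_eq0; apply/eqP/idem_chi0_eq0.
  by rewrite mulrBr mulr1 mulrBl mul1r uu subrr subr0.
by move=> s; rewrite rmorphB rmorph1 /= chi_u subrr.
Qed.

Lemma chi_primitive E s0 :
  (forall s, chi s E != 0 -> chi s =1 chi s0) -> primitive mul E.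
Proof.
move=> chiE Y Z EYZ YY ZZ YZ ZY; subst E.
have vanish W : W * W = W -> W * (Y + Z) = W -> chi s0 W = 0 -> W = 0.
  move=> WW WE chiW0; apply: idem_chi0_eq0 => // s.
  rewrite -WE rmorphM /=; have [->|/chiE->] := eqVneq (chi s (Y + Z)) 0.
    by rewrite mulr0.
  by rewrite chiW0 mul0r.
have YE : Y * (Y + Z) = Y by rewrite mulrDr [Y * Y]YY [Y * Z]YZ addr0.
have ZE : Z * (Y + Z) = Z by rewrite mulrDr [Z * Z]ZZ [Z * Y]ZY add0r.
have /eqP : chi s0 Y * chi s0 Z = 0 by rewrite -rmorphM [Y * Z]YZ rmorph0.
by rewrite mulf_eq0 => /orP[] /eqP chi0; [left; apply: vanish | right; apply: vanish].
Qed.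

Section LoopTypes.
Variable S : {set M}.
Hypothesis genS : generates mul e S.

Lemma fixed_foldr s w : (mul s (foldr mul e w) == s) = all (fun k => mul s k == s) w.
Proof. by elim: w => [|k w IH] /=; rewrite ?mulm1 ?eqxx // fixed_mul IH. Qed.

Lemma fixed_LS s s' t : LS mul S s = LS mul S s' -> (mul s t == s) = (mul s' t == s').
Proof.
move/setP=> LSE; have [w wS ->] := genS t; rewrite !fixed_foldr.
by apply: eq_in_all => k /wS kS; have := LSE k; rewrite !inE kS.
Qed.

Lemma chi_LS s s' : LS mul S s = LS mul S s' -> chi s =1 chi s'.
Proof. by move=> LSE x; apply: eq_bigl => t; rewrite (fixed_LS t LSE). Qed.

Lemma chi_loop_product s s0 (tau kap : seq M) :
  perm_eq tau (enum (LS mul S s0)) -> perm_eq kap (enum (S :\: LS mul S s0)) ->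
  chi s (zmul (zprod mul e (map (zof (M:=M)) tau))
              (zprod mul e (map (fun k => zone - zof k) kap)))
  = if LS mul S s == LS mul S s0 then 1 else 0.
Proof.
move=> tauE kapE; rewrite !zprod_map rmorphM /= !rmorph_prod /=.
rewrite (perm_big _ tauE) (perm_big _ kapE) !big_enum /=.
have inLS t : t \in S -> (t \in LS mul S s) = (mul s t == s) by rewrite inE => ->.
have in_part : \prod_(t in LS mul S s0) chi s (zof t) =
                \prod_(t in LS mul S s0) (if t \in LS mul S s then 1 else 0).
  by apply: eq_bigr => t; rewrite inE => /andP[tS _]; rewrite chi_zof inLS.
have out_part : \prod_(t in S :\: LS mul S s0) chi s (zone - zof t) =
                 \prod_(t in S :\: LS mul S s0) (if t \notin LS mul S s then 1 else 0).
  apply: eq_bigr => t; rewrite in_setD => /andP[_ tS].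
  rewrite rmorphB /= [chi s zone]chi_zof chi_zof mulm1 eqxx inLS //.
  by case: ifP; rewrite ?subrr ?subr0.
rewrite in_part out_part !prodr_indicator; have [LSE|LSN] := eqVneq (LS mul S s) (LS mul S s0).
  rewrite -LSE; case: forall_inP => [_|[]]; last by [].
  by case: forall_inP => [_|[] t]; rewrite ?mulr1 // in_setD => /andP[].
case: forall_inP => [sub|_]; last by rewrite mul0r.
case: forall_inP => [dis|_]; last by rewrite mulr0.
case/eqP: LSN; apply/setP => t; apply/idP/idP => [tL|]; last exact: sub.
have tS : t \in S by move: tL; rewrite inE => /andP[].
by apply: contraLR tL => tN; apply: dis; rewrite inE tN.
Qed.

End LoopTypes.

Section Construction.
Variables (p : nat) (cls : nat -> pred M) (T : nat -> ZM M) (a b : nat -> nat).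
Hypothesis chiT : forall m s, (m < p)%N -> chi s (T m) = if cls m s then 1 else 0.
Hypothesis cls_inj : forall m m' s, (m < p)%N -> (m' < p)%N -> cls m s -> cls m' s -> m = m'.
Hypothesis cls_nonempty : forall m, (m < p)%N -> exists s, cls m s.
Hypothesis a_ge : forall m, (m < p)%N -> (#|M| - #|[set s | cls m s]| <= a m)%N.
Hypothesis b_ge : forall m, (m < p)%N -> (#|[set s | cls m s]| <= b m)%N.

Definition chi_indicators (Es : seq (ZM M)) :=
  forall i s, (i < size Es)%N -> chi s Es`_i = if cls i s then 1 else 0.

Lemma chi_Qstep m Es s : (m < p)%N -> size Es = m -> chi_indicators Es ->
  chi s (Qstep mul (T m) Es) = if cls m s then 1 else 0.
Proof.
move=> mp sizeEs chiEs; rewrite QstepE !rmorphM rmorphB rmorph1 /= chiT //.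
case: ifP => [clsm|]; last by rewrite mulr0 mul0r.
suff -> : chi s (\sum_(y <- Es) y) = 0 by rewrite subr0 !mulr1.
rewrite rmorph_sum /= (big_nth 0) big_mkord big1 // => i _; rewrite chiEs //.
case: ifP => // clsi; have ip : (i < p)%N by rewrite (leq_trans (ltn_ord i)) // sizeEs ltnW.
by have := ltn_ord i; rewrite (cls_inj ip mp clsi clsm) sizeEs ltnn.
Qed.

Lemma a_gt0 m s : (m < p)%N -> ~~ cls m s -> (0 < a m)%N.
Proof.
move=> mp nclsm; apply: leq_trans (a_ge mp); rewrite subn_gt0.
by rewrite -(cardsC [set s | cls m s]) -addn1 leq_add2l; apply/card_gt0P; exists s; rewrite !inE.
Qed.

Lemma Pab_Qstep m Es : (m < p)%N -> size Es = m ->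
  orthogonal_idempotents Es -> chi_indicators Es ->
  let E := Pab mul e (a m) (b m) (Qstep mul (T m) Es) in
  [/\ E * E = E, forall s, chi s E = (if cls m s then 1 else 0)
    & forall i, (i < m)%N -> Es`_i * E = 0 /\ E * Es`_i = 0].
Proof.
move=> mp sizeEs orth chiEs E; rewrite /E PabE; set Q := Qstep mul _ _.
have chiQ s : chi s Q = if cls m s then 1 else 0 by exact: chi_Qstep.
have chiQ01 t : chi t Q = 0 \/ chi t Q = 1 by rewrite chiQ; case: ifP; [right | left].
have clsQ : #|[set t | chi t Q == 1]| = #|[set s | cls m s]|.
  by apply: eq_card => t; rewrite !inE chiQ; case: (cls m t).
have [s0 clss0] := cls_nonempty mp.
have b_gt0 : (0 < b m)%N by apply: leq_trans (b_ge mp); apply/card_gt0P; exists s0; rewrite inE.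
split.
- apply: (Pab_idem (chi01_nilpotent chiQ01)); rewrite clsQ; [exact: a_ge | exact: b_ge].
- move=> s; rewrite rmorphB rmorph1 rmorphXn rmorphB rmorph1 rmorphXn /= chiQ.
  case: ifP => clsm; first by rewrite expr1n subrr expr0n eqn0Ngt b_gt0 subr0.
  by rewrite expr0n eqn0Ngt (a_gt0 mp (negbT clsm)) subr0 expr1n subrr.
move=> i im; have ilt : (i < size Es)%N by rewrite sizeEs.
have [s1 clsi] := cls_nonempty (ltn_trans im mp).
have nclsm : ~~ cls m s1.
  by apply/negP => clsm; have := im; rewrite (cls_inj (ltn_trans im mp) mp clsi clsm) ltnn.
have [EQ QE] := Qstep_orthogonal (T m) orth ilt; have a_pos := a_gt0 mp nclsm.
by split; [exact: mulr_Pab_eq0 | exact: Pab_mulr_eq0].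
Qed.

Lemma Eseq_spec m : (m <= p)%N ->
  let Es := Eseq mul e T a b m in
  [/\ size Es = m, orthogonal_idempotents Es & chi_indicators Es].
Proof.
elim: m => [|m IH] mp /=; first by split=> // i.
have [sizeEs orth chiEs] := IH (ltnW mp).
have [EE chiE orthE] := Pab_Qstep mp sizeEs orth chiEs.
split; first by rewrite size_rcons sizeEs.
  by apply: orthogonal_idempotents_rcons => // i; rewrite sizeEs; apply: orthE.
move=> i s; rewrite size_rcons nth_rcons sizeEs ltnS leq_eqVlt => /predU1P[->|ilt].
  by rewrite ltnn eqxx.
by rewrite ilt chiEs ?sizeEs.
Qed.

End Construction.

Lemma Esys_spec p (T : 'I_p -> ZM M) (a b : 'I_p -> nat) (c : 'I_p -> pred M) :
  (forall i s, chi s (T i) = if c i s then 1 else 0) ->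
  (forall i j s, c i s -> c j s -> i = j) ->
  (forall i, exists s, c i s) ->
  (forall i, #|M| - #|[set s | c i s]| <= a i)%N ->
  (forall i, #|[set s | c i s]| <= b i)%N ->
  let E := Esys mul e T a b in
  (forall i j, E i * E j = if i == j then E i else 0) /\
  (forall i s, chi s (E i) = if c i s then 1 else 0).
Proof.
move=> chiT c_inj c_nonempty a_ge b_ge E.
pose cn m := [pred s | if insub m is Some i then c i s else false].
pose Tn m := if insub m is Some i then T i else 0.
pose an m := if insub m is Some i then a i else 0%N.
pose bn m := if insub m is Some i then b i else 0%N.
have Some_ord m : (m < p)%N -> exists2 i : 'I_p, insub m = Some i & val i = m.
  by case: insubP => [i _ <-|/negP//]; exists i.
have chiTn m s : (m < p)%N -> chi s (Tn m) = if cn m s then 1 else 0.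
  by case/Some_ord=> i im _; rewrite /Tn /= im; apply: chiT.
have cn_inj m m' s : (m < p)%N -> (m' < p)%N -> cn m s -> cn m' s -> m = m'.
  move=> /Some_ord[i im iE] /Some_ord[j jm jE] /=; rewrite im jm.
  by move=> ci cj; rewrite -iE -jE (c_inj _ _ _ ci cj).
have cn_nonempty m : (m < p)%N -> exists s, cn m s.
  by case/Some_ord=> i im _; have [s ci] := c_nonempty i; exists s; rewrite /= im.
have an_ge m : (m < p)%N -> (#|M| - #|[set s | cn m s]| <= an m)%N.
  by case/Some_ord=> i im _; rewrite /an /cn /= im; apply: a_ge.
have bn_ge m : (m < p)%N -> (#|[set s | cn m s]| <= bn m)%N.
  by case/Some_ord=> i im _; rewrite /bn /cn /= im; apply: b_ge.
have [sizeEs orth chiEs] := Eseq_spec chiTn cn_inj cn_nonempty an_ge bn_ge (leqnn p).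
split=> [i j|i s]; rewrite /E /Esys.
  by rewrite orth ?sizeEs // -val_eqE.
by rewrite chiEs ?sizeEs //= valK.
Qed.

Lemma complete_of_indicators p (E : 'I_p -> ZM M) (c : 'I_p -> pred M) :
  (forall i j, E i * E j = if i == j then E i else 0) ->
  (forall i s, chi s (E i) = if c i s then 1 else 0) ->
  (forall i s s', c i s -> c i s' -> chi s =1 chi s') ->
  (forall i j s, c i s -> c j s -> i = j) ->
  (forall s, exists i, c i s) ->
  (forall i, exists s, c i s) ->
  complete_prim_orth_idem mul e E.
Proof.
move=> orth chiE chi_const c_inj c_cover c_nonempty; split.
- move=> i; have [s ci] := c_nonempty i; apply/eqP => Ei0.
  by have /eqP := chiE i s; rewrite Ei0 rmorph0 ci.
- by move=> i; have := orth i i; rewrite eqxx.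
- by move=> i j ij; have := orth i j; rewrite (negPf ij).
- move=> i; have [s0 cis0] := c_nonempty i; apply: (@chi_primitive _ s0) => s.
  by rewrite chiE; case: ifP => [cis _ | _]; [exact: chi_const cis cis0 | rewrite eqxx].
apply: idem_chi1_eq1 => [|s].
  rewrite mulr_suml; apply: eq_bigr => i _; rewrite mulr_sumr (bigD1 i) //= orth eqxx.
  by rewrite big1 ?addr0 // => j ji; rewrite orth eq_sym (negPf ji).
have [i ci] := c_cover s; rewrite rmorph_sum (bigD1 i) //= chiE ci big1 ?addr0 // => j ji.
by rewrite chiE; case: ifP => // cj; case/eqP: ji; apply: c_inj cj ci.
Qed.
End Characters.

End MonoidRing.

Theorem mainTheorem9
  (M : finType) (mul : M -> M -> M) (e : M)
  (mulA : associative mul) (mul1m : left_id e mul) (mulm1 : right_id e mul)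
  (Rtriv : R_trivial mul)
  (S : {set M}) (genS : generates mul e S)
  (p : nat) (sig : 'I_p -> M)
  (sig_distinct : forall i j : 'I_p, LS mul S (sig i) = LS mul S (sig j) -> i = j)
  (sig_complete : forall s : M, exists i : 'I_p, LS mul S s = LS mul S (sig i))
  (tau kap : 'I_p -> seq M)
  (tau_ord : forall i, perm_eq (tau i) (enum (LS mul S (sig i))))
  (kap_ord : forall i, perm_eq (kap i) (enum (S :\: LS mul S (sig i))))
  (a b : 'I_p -> nat)
  (ha : forall i, (#|M| - #|[set s : M | LS mul S s == LS mul S (sig i)]| <= a i)%N)
  (hb : forall i, (#|[set s : M | LS mul S s == LS mul S (sig i)]| <= b i)%N) :
  let T := fun i : 'I_p =>
    zmul mul (zprod mul e (map (zof (M:=M)) (tau i)))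
             (zprod mul e (map (fun k => zone e - zof k) (kap i))) in
  complete_prim_orth_idem mul e (Esys mul e T a b).
Proof.
move=> T; pose c (i : 'I_p) : pred M := [pred s | LS mul S s == LS mul S (sig i)].
have chiT i s : chi mul s (T i) = if c i s then 1 else 0 by exact: chi_loop_product.
have c_inj i j s : c i s -> c j s -> i = j.
  by move=> /eqP si /eqP sj; apply: sig_distinct; rewrite -si -sj.
have c_sig i : exists s, c i s by exists (sig i); apply/eqP.
have [orth chiE] := Esys_spec mulA mul1m mulm1 Rtriv chiT c_inj c_sig ha hb.
apply: complete_of_indicators orth chiE _ c_inj _ c_sig => //.
  by move=> i s s' /eqP sE /eqP s'E; apply: chi_LS => //; rewrite sE s'E.
by move=> s; have [i sE] := sig_complete s; exists i; apply/eqP.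
Qed.
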